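(* Let $\Delta$ be a finite set of defaults such that $\Delta^\rightarrow$ is consistent, and suppose $\Delta$ has Z-partition $(\Delta_0,\ldots,\Delta_n)$. Then for all $\theta,\phi\in L$: $\theta\mid\!\sim^\Delta_{lex}\phi$ if and only if $\theta\mid\!\sim_{\vec{\mathcal R}}\phi$, where $\vec{\mathcal R}=(\cdots((\vec{\mathcal U}^\emptyset*\vec{\mathcal U}^{\Delta^\rightarrow_0})*\vec{\mathcal U}^{\Delta^\rightarrow_1})*\cdots)*\vec{\mathcal U}^{\Delta^\rightarrow_n}$.
   Context: $L$ is a propositional language built from a finite set of propositional variables with the connectives $\neg,\wedge,\vee,\rightarrow,\top,\bot$; $W$ is the finite set of propositional worlds. For $\theta\in L$, $S_\theta=\{w\in W\mid w\models\theta\}$; $E\models\phi$ means $\bigcap_{\theta\in E}S_\theta\subseteq S_\phi$; $E$ is consistent iff $E\not\models\bot$. For $w\in W$ and $E\subseteq L$, $\mathrm{sent}_E(w)=\{\theta\in E\mid w\models\theta\}$. Defaults: a default is an expression $\lambda\Rightarrow\chi$ with $\lambda,\chi\in L$. For a set $\Gamma$ of defaults, $\Gamma^\rightarrow=\{\lambda\rightarrow\chi\mid\lambda\Rightarrow\chi\in\Gamma\}$. A default $\lambda\Rightarrow\chi$ is tolerated by $\Gamma$ iff $\{\lambda\wedge\chi\}\cup\Gamma^\rightarrow$ is consistent. The Z-partition of $\Delta$ is obtained by letting $\Delta_0$ be the set of defaults in $\Delta$ tolerated by $\Delta$, and, for $i\ge1$, $\Delta_i$ the set of defaults in $\Delta\setminus(\Delta_0\cup\cdots\cup\Delta_{i-1})$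 tolerated by $\Delta\setminus(\Delta_0\cup\cdots\cup\Delta_{i-1})$, stopping at the first $n$ with $\Delta_0\cup\cdots\cup\Delta_n=\Delta$ (the Z-partition exists when each step yields a nonempty set until $\Delta$ is exhausted). Lexicographic closure: for $A,B\subseteq\Delta$ let $A_i=A\cap\Delta_i$, $B_i=B\cap\Delta_i$; $A\ll_{lex}B$ iff there is $i$ with $|A_i|<|B_i|$ and $|A_j|=|B_j|$ for all $j>i$. Then $\theta\mid\!\sim^\Delta_{lex}\phi$ iff for every $\Gamma\subseteq\Delta$ such that $\Gamma^\rightarrow\cup\{\theta\}$ is consistent and $\Gamma$ is $\ll_{lex}$-maximal among such subsets (no such $\Gamma'$ with $\Gamma\ll_{lex}\Gamma'$), we have $\Gamma^\rightarrow\cup\{\theta\}\models\phi$. Sequences: finite sequences $\vec{\mathcal U}=(\mathcal U_0,\ldots,\mathcal U_k)$ of mutually disjoint subsets of $W$ (components may be empty, possibly repeatedly). $\mathrm{rank}^{\vec{\mathcal U}}(\theta)$ is the least $i$ with $\mathcal U_i\cap S_\theta\neq\emptyset$, $\infty$ if none ($i<\infty$ for all integers $i$). $\theta\mid\!\sim_{\vec{\mathcal U}}\phi$ iff $\mathrm{rank}^{\vec{\mathcal U}}(\theta)<\mathrm{rank}^{\vec{\mathcal U}}(\theta\wedge\neg\phi)$ or $\mathrm{rank}^{\vec{\mathcal U}}(\theta)=\infty$. $\vec{\mathcal U}$ is full iff $\bigcup_i\mathcal U_i=W$, empty iff $\bigcup_i\mathcal U_i=\emptyset$; $\Upsilon$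 is the set of sequences which are full or empty. Sequence revision: for $\vec{\mathcal U}=(\mathcal U_0,\ldots,\mathcal U_k)$, $\vec{\mathcal V}=(\mathcal V_0,\ldots,\mathcal V_m)$ in $\Upsilon$, if $\vec{\mathcal U}$ is full then $\vec{\mathcal U}*\vec{\mathcal V}=(\mathcal U_0\cap\mathcal V_0,\ldots,\mathcal U_k\cap\mathcal V_0,\ \mathcal U_0\cap\mathcal V_1,\ldots,\mathcal U_k\cap\mathcal V_1,\ \ldots,\ \mathcal U_0\cap\mathcal V_m,\ldots,\mathcal U_k\cap\mathcal V_m)$; otherwise $\vec{\mathcal U}*\vec{\mathcal V}=\vec{\mathcal V}$. For finite $E\subseteq L$ with $|E|=k$: $\mathcal U^E_i=\{w\in W\mid|\mathrm{sent}_E(w)|=k-i\}$ ($i=0,\ldots,k$) if $E\not\models\bot$, and $\mathcal U^E_i=\emptyset$ otherwise; $\vec{\mathcal U}^E=(\mathcal U^E_0,\ldots,\mathcal U^E_k)$. In particular $\vec{\mathcal U}^\emptyset=(W)$. *)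

From mathcomp Require Import all_boot.
Set Implicit Arguments.
Unset Strict Implicit.
Unset Printing Implicit Defensive.

Inductive form (V : Type) : Type :=
  | FVar of V
  | FNeg of form V
  | FAnd of form V & form V
  | FOr of form V & form V
  | FImp of form V & form V
  | FTop
  | FBot.
Arguments FTop {V}.
Arguments FBot {V}.

Definition world (V : finType) := {ffun V -> bool}.

Fixpoint sat (V : finType) (w : world V) (f : form V) : bool :=
  match f with
  | FVar v => w v
  | FNeg g => ~~ sat w g
  | FAnd g h => sat w g && sat w h
  | FOr g h => sat w g || sat w h
  | FImp g h => sat w g ==> sat w h
  | FTop => true
  | FBot => false
  end.

Definition entails (V : finType) (E : seq (form V)) (phi : form V) : bool :=
  [forall w : world V, all (sat w) E ==> sat w phi].

Definition consistent (V : finType) (E : seq (form V)) : bool :=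
  ~~ entails E FBot.

Section Defaults.
Variables (V I : finType).
(* A finite set of defaults Delta is given as an injective family
   D : I -> form V * form V, (lambda, chi) standing for lambda => chi.
   Subsets of Delta are subsets of the index type I. *)
Variable D : I -> form V * form V.

Definition dimp (d : form V * form V) : form V := FImp d.1 d.2.

Definition arrows (G : {set I}) : seq (form V) := [seq dimp (D j) | j <- enum G].

Definition tolerated (d : form V * form V) (G : {set I}) : bool :=
  consistent (FAnd d.1 d.2 :: arrows G).

Definition Zpartition (P : nat -> {set I}) (n : nat) : Prop :=
  (forall i, i <= n ->
     P i = [set j in setT :\: \bigcup_(k < i) P k
              | tolerated (D j) (setT :\: \bigcup_(k < i) P k)])
  /\ (forall i, i < n -> \bigcup_(k < i.+1) P k != setT)
  /\ \bigcup_(k < n.+1) P k = setT.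

Definition lexlt (P : nat -> {set I}) (n : nat) (A B : {set I}) : Prop :=
  exists i, i <= n /\ #|A :&: P i| < #|B :&: P i| /\
    (forall j, i < j <= n -> #|A :&: P j| = #|B :&: P j|).

Definition lex_cons (P : nat -> {set I}) (n : nat) (theta phi : form V) : Prop :=
  forall G : {set I},
    consistent (theta :: arrows G) ->
    ~ (exists G' : {set I}, consistent (theta :: arrows G') /\ lexlt P n G G') ->
    entails (theta :: arrows G) phi.

End Defaults.

Section Sequences.
Variable V : finType.
Notation wseq := (seq {set world V}).

Definition hits (theta : form V) (U : {set world V}) : bool :=
  [exists w in U, sat w theta].

(* rank: None stands for infinity *)
Definition rank (s : wseq) (theta : form V) : option nat :=
  if has (hits theta) s then Some (find (hits theta) s) else None.

Definition lt_rank (a b : option nat) : bool :=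
  match a, b with
  | Some i, Some j => i < j
  | Some _, None => true
  | None, _ => false
  end.

Definition seq_cons (s : wseq) (theta phi : form V) : bool :=
  lt_rank (rank s theta) (rank s (FAnd theta (FNeg phi))) || (rank s theta == None).

Definition full (s : wseq) : bool := \bigcup_(U <- s) U == setT.

Definition revise (s t : wseq) : wseq :=
  if full s then flatten [seq [seq Ui :&: Vj | Ui <- s] | Vj <- t] else t.

(* U^E for a finite set E, given as a duplicate-free list *)
Definition Uvec (E : seq (form V)) : wseq :=
  if consistent E then
    mkseq (fun i => [set w | count (sat w) E == size E - i]) (size E).+1
  else nseq (size E).+1 set0.

End Sequences.

Definition Rseq (V I : finType) (D : I -> form V * form V)
  (P : nat -> {set I}) (n : nat) : seq {set world V} :=
  foldl (@revise V) (Uvec [::]) [seq Uvec (arrows D (P i)) | i <- iota 0 n.+1].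

From mathcomp Require Import all_boot zify.
Set Implicit Arguments.
Unset Strict Implicit.
Unset Printing Implicit Defensive.

(* A world w is judged by the set of defaults it satisfies.  Revising full
   sequences of level sets multiplies out to the level sets of a mixed-radix
   number, so the revised sequence R lists the worlds by the number whose
   i-th digit counts the defaults of Delta_i violated by w, Delta_n being the
   most significant digit.  Comparing these numbers is the lexicographic order
   on satisfied-default sets, and the lex-maximal sets consistent with theta
   are exactly the satisfied-default sets of the R-minimal theta-worlds.
   The argument works for any family Delta_0, ..., Delta_n of sets of
   defaults. *)

Lemma consistentP (V : finType) (E : seq (form V)) :
  reflect (exists w, all (sat w) E) (consistent E).
Proof.
rewrite /consistent /entails negb_forall.
apply: (iffP existsP) => -[w]; first by rewrite implybF negbK; exists w.
by exists w; rewrite implybF negbK.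
Qed.

Lemma entailsP (V : finType) (E : seq (form V)) (phi : form V) :
  reflect (forall w, all (sat w) E -> sat w phi) (entails E phi).
Proof. by apply: (iffP forallP) => h w; apply/implyP/h. Qed.

Lemma ltn_mixed_radix a b x y A : x < A -> y < A ->
  (a * A + x < b * A + y) = (a < b) || ((a == b) && (x < y)).
Proof.
have lt_digit c d z t : c < d -> z < A -> c * A + z < d * A + t.
  move=> lt_cd lt_zA; apply: (@leq_trans (c.+1 * A)).
    by rewrite mulSn addnC ltn_add2r.
  exact: leq_trans (leq_mul lt_cd (leqnn A)) (leq_addr _ _).
move=> xA yA; case: (ltngtP a b) => [lt_ab | lt_ba | ->] /=.
- exact: lt_digit.
- by apply/negbTE; rewrite -leqNgt ltnW // lt_digit.
- by rewrite ltn_add2l.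
Qed.

Section LevelSets.
Variable V : finType.
Notation W := (world V).

Definition level_sets (f : W -> nat) (a : nat) : seq {set W} :=
  mkseq (fun k => [set w | f w == k]) a.

Variables (f : W -> nat) (a : nat).
Hypothesis f_lt : forall w, f w < a.

Lemma nth_level_sets k :
  k < a -> nth set0 (level_sets f a) k = [set w | f w == k].
Proof. by move=> lt_ka; rewrite nth_mkseq. Qed.

Lemma full_level_sets : full (level_sets f a).
Proof.
apply/eqP/setP => w; rewrite inE bigcup_seq; apply/bigcupP.
exists (nth set0 (level_sets f a) (f w)); first by rewrite mem_nth ?size_mkseq.
by rewrite nth_level_sets // inE.
Qed.

Lemma revise_level_sets g b :
  revise (level_sets f a) (level_sets g b)
  = level_sets (fun w => g w * a + f w) (b * a).
Proof.
rewrite /revise full_level_sets.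
elim: b => [//|b IH].
rewrite [level_sets g _]/level_sets mkseqS -cats1 map_cat flatten_cat -/(level_sets g b) IH.
rewrite /= cats0 /level_sets mulSn addnC /mkseq iotaD map_cat add0n; congr cat.
rewrite -[b * a]addn0 iotaDl -!map_comp; apply/eq_in_map => k.
rewrite mem_iota add0n => /= lt_ka; apply/setP => w; rewrite !inE.
apply/andP/eqP => [[/eqP -> /eqP ->] // | code_w].
have f_w : f w = k by have := congr1 (modn^~ a) code_w; rewrite /= !modnMDl !modn_small.
have a_gt0 : 0 < a by apply: leq_ltn_trans lt_ka.
rewrite f_w eqxx; split=> //; move: code_w; rewrite f_w => /addIn/eqP.
by rewrite eqn_pmul2r.
Qed.

Variant rank_level_spec (th : form V) : option nat -> Prop :=
  | RankNone of (forall w, ~~ sat w th) : rank_level_spec th None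
  | RankSome w of sat w th & (forall u, sat u th -> f w <= f u) :
      rank_level_spec th (Some (f w)).

Lemma rank_level_setsP th : rank_level_spec th (rank (level_sets f a) th).
Proof.
rewrite /rank; case: ifPn => [has_th | /hasPn no_th].
  have lt_find : find (hits th) (level_sets f a) < a.
    by move: has_th; rewrite has_find size_mkseq.
  have min_find u : sat u th -> find (hits th) (level_sets f a) <= f u.
    move=> su; rewrite leqNgt; apply/negP => lt_u.
    have := before_find set0 lt_u; rewrite nth_level_sets //.
    by move/existsPn/(_ u); rewrite inE eqxx su.
  have /existsP [w /andP [wk sw]] := nth_find set0 has_th.
  move: wk; rewrite nth_level_sets // inE => /eqP f_w.
  by rewrite -f_w; apply: RankSome sw _ => u; rewrite f_w; apply: min_find.
constructor => w; apply/negP => sw.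
have /no_th : nth set0 (level_sets f a) (f w) \in level_sets f a.
  by rewrite mem_nth ?size_mkseq.
by rewrite nth_level_sets // => /existsPn/(_ w); rewrite inE eqxx sw.
Qed.

Lemma seq_cons_level_sets th ph :
  seq_cons (level_sets f a) th ph <->
  (forall w, sat w th -> (forall u, sat u th -> f w <= f u) -> sat w ph).
Proof.
rewrite /seq_cons; case: rank_level_setsP => [no_th | w sw min_w].
  by rewrite orbT; split=> // _ w sw; rewrite (negbTE (no_th w)) in sw.
rewrite orbF; case: rank_level_setsP => [no_cex | v /andP [sv nv] min_v] /=.
  by split=> // _ u su _; have := no_cex u; rewrite /= su negbK.
split=> [lt_wv u su min_u | H].
  apply/negPn/negP => nu; have := min_v u; rewrite /= su nu => /(_ isT) le_vu.
  by have := leq_trans le_vu (min_u w sw); rewrite leqNgt lt_wv.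
rewrite ltn_neqAle min_w ?sv // andbT; apply: contraNneq nv => eq_wv.
by apply: H => // u su; rewrite -eq_wv; apply: min_w.
Qed.

End LevelSets.

Lemma Uvec_level_sets (V : finType) (E : seq (form V)) : consistent E ->
  Uvec E = level_sets (fun w => size E - count (sat w) E) (size E).+1.
Proof.
move=> cE; rewrite /Uvec cE; apply/eq_in_map => k; rewrite mem_iota => /andP [_ lt_k].
apply/setP => w; rewrite !inE; have le_count := count_size (sat w) E.
by apply/eqP/eqP; lia.
Qed.

Section RevisedUvec.
Variables (V : finType) (E : nat -> seq (form V)).
Hypothesis consistent_E : forall i, consistent (E i).

Definition falsified i (w : world V) := size (E i) - count (sat w) (E i).

Fixpoint radix m := if m is m'.+1 then (size (E m')).+1 * radix m' else 1.

Fixpoint code m (w : world V) :=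
  if m is m'.+1 then falsified m' w * radix m' + code m' w else 0.

Lemma code_lt m w : code m w < radix m.
Proof.
elim: m => [//|m IH] /=.
apply: (@leq_trans (falsified m w * radix m + radix m)); first by rewrite ltn_add2l.
by rewrite -mulSnr leq_mul2r ltnS leq_subr orbT.
Qed.

Lemma foldl_revise_Uvec m :
  foldl (@revise V) (Uvec [::]) [seq Uvec (E i) | i <- iota 0 m]
  = level_sets (code m) (radix m).
Proof.
elim: m => [|m IH].
  by rewrite Uvec_level_sets //; apply/consistentP; exists [ffun=> true].
rewrite -addn1 iotaD map_cat foldl_cat IH /= add0n Uvec_level_sets //.
by rewrite revise_level_sets ?addn1 //; apply: code_lt.
Qed.

End RevisedUvec.

Section LexOrder.
Variables (I : finType) (P : nat -> {set I}).

Lemma lexlt0 A B : lexlt P 0 A B <-> #|A :&: P 0| < #|B :&: P 0|.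
Proof.
split=> [[i []] | lt0]; first by rewrite leqn0 => /eqP -> [].
by exists 0; split=> //; split=> // -[|j] /andP [].
Qed.

Lemma lexltS n A B : lexlt P n.+1 A B <->
  #|A :&: P n.+1| < #|B :&: P n.+1| \/
  (#|A :&: P n.+1| = #|B :&: P n.+1| /\ lexlt P n A B).
Proof.
split=> [[i [le_in [lt_i eq_above]]] | [lt_top | [eq_top [i [le_in [lt_i eq_above]]]]]].
- case: (ltngtP i n.+1) le_in => // [lt_in _ | <- _]; last by left.
  right; split; first by apply: eq_above; rewrite lt_in leqnn.
  exists i; split=> //; split=> // j /andP [lt_ij le_jn].
  by apply: eq_above; rewrite lt_ij ltnW.
- exists n.+1; split=> //; split=> // j; by case: ltngtP.
- exists i; split; first exact: leqW.
  split=> // j /andP [lt_ij]; rewrite leq_eqVlt => /orP [/eqP -> // | lt_jn].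
  by apply: eq_above; rewrite lt_ij.
Qed.

Lemma lexlt_from_leq n A B :
  (exists i, i <= n /\ #|A :&: P i| < #|B :&: P i| /\
     forall j, i < j <= n -> #|A :&: P j| <= #|B :&: P j|) ->
  lexlt P n A B.
Proof.
move=> [i [le_in [lt_i le_above]]].
have ex_strict : exists k, (k <= n) && (#|A :&: P k| < #|B :&: P k|).
  by exists i; rewrite le_in.
have bounded k : (k <= n) && (#|A :&: P k| < #|B :&: P k|) -> k <= n.
  by case/andP.
case: (ex_maxnP ex_strict bounded) => k /andP [le_kn lt_k] max_k.
exists k; split=> //; split=> // j /andP [lt_kj le_jn].
have le_ij : i < j by apply: leq_ltn_trans lt_kj; apply: max_k; rewrite le_in.
apply/eqP; rewrite eqn_leq le_above ?le_ij //= leqNgt; apply/negP => lt_j.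
by have := max_k j; rewrite le_jn lt_j => /(_ isT); rewrite leqNgt lt_kj.
Qed.

Lemma lexlt_subset n (A A' B B' : {set I}) :
  A' \subset A -> B \subset B' -> lexlt P n A B -> lexlt P n A' B'.
Proof.
move=> sA sB [i [le_in [lt_i eq_above]]].
have le_A j : #|A' :&: P j| <= #|A :&: P j| by apply/subset_leq_card/setSI.
have le_B j : #|B :&: P j| <= #|B' :&: P j| by apply/subset_leq_card/setSI.
apply: lexlt_from_leq; exists i; split=> //; split.
  exact: leq_ltn_trans (le_A i) (leq_trans lt_i (le_B i)).
by move=> j hj; rewrite (leq_trans (le_A j)) // eq_above.
Qed.

End LexOrder.

Section Defaults.
Variables (V I : finType) (D : I -> form V * form V) (P : nat -> {set I}).

Definition satisfied (w : world V) : {set I} := [set j | sat w (dimp (D j))].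

Lemma all_sat_arrows w G : all (sat w) (arrows D G) = (G \subset satisfied w).
Proof.
rewrite all_map; apply/allP/subsetP => [sat_G j jG | sub_G j].
  by rewrite inE; apply: (sat_G j); rewrite mem_enum.
by rewrite mem_enum => /sub_G; rewrite inE.
Qed.

Lemma count_sat_arrows w G :
  count (sat w) (arrows D G) = #|satisfied w :&: G|.
Proof.
rewrite count_map -size_filter cardE /enum_mem -filter_predI; congr size.
by apply: eq_filter => j; rewrite !inE andbC.
Qed.

Lemma size_arrows G : size (arrows D G) = #|G|.
Proof. by rewrite size_map cardE. Qed.

Lemma consistent_arrowsS (G G' : {set I}) :
  G \subset G' -> consistent (arrows D G') -> consistent (arrows D G).
Proof.
move=> sG /consistentP [w]; rewrite all_sat_arrows => sG'.
by apply/consistentP; exists w; rewrite all_sat_arrows (subset_trans sG).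
Qed.

Notation Darrows := (fun i => arrows D (P i)).

Lemma code_arrows_ltE n w u :
  code Darrows n.+1 w < code Darrows n.+1 u <->
  lexlt P n (satisfied u) (satisfied w).
Proof.
have le_P i v : #|satisfied v :&: P i| <= #|P i|.
  by rewrite subset_leq_card // subsetIr.
have card_bounds i := (le_P i w, le_P i u).
elim: n => [|n IH].
  rewrite lexlt0 /= /falsified !count_sat_arrows !size_arrows !muln1 !addn0.
  by case: (card_bounds 0); lia.
rewrite [code _ n.+2 w]/= [code _ n.+2 u]/= -/(code _ n.+1 w) -/(code _ n.+1 u).
rewrite ltn_mixed_radix ?code_lt // lexltS -IH.
rewrite /falsified !count_sat_arrows !size_arrows.
by case: (card_bounds n.+1); lia.
Qed.

Lemma lex_cons_maximal_worlds n th ph :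
  lex_cons D P n th ph <->
  (forall w, sat w th ->
     (forall u, sat u th -> ~ lexlt P n (satisfied w) (satisfied u)) -> sat w ph).
Proof.
have consistent_satisfied w : sat w th -> consistent (th :: arrows D (satisfied w)).
  by move=> sw; apply/consistentP; exists w; rewrite /= sw all_sat_arrows subxx.
split=> [H w sw max_w | H G _ max_G].
  have no_better : ~ exists G', consistent (th :: arrows D G') /\
                               lexlt P n (satisfied w) G'.
    case=> G' [/consistentP [u /= /andP [su]]]; rewrite all_sat_arrows => sub_G' lt_G'.
    by apply: (max_w u su); apply: lexlt_subset lt_G'.
  have /entailsP := H _ (consistent_satisfied w sw) no_better; apply.
  by rewrite /= sw all_sat_arrows subxx.
apply/entailsP => w /= /andP [sw]; rewrite all_sat_arrows => sub_G.
apply: H => // u su lt_u; apply: max_G; exists (satisfied u).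
split; first exact: consistent_satisfied.
exact: lexlt_subset lt_u.
Qed.

End Defaults.

Theorem theorem2 (V I : finType) (D : I -> form V * form V)
  (Dinj : injective D) (P : nat -> {set I}) (n : nat)
  (hcons : consistent (arrows D setT)) (hZ : Zpartition D P n)
  (theta phi : form V) :
  lex_cons D P n theta phi <-> seq_cons (Rseq D P n) theta phi.
Proof.
have consistent_blocks i : consistent (arrows D (P i)).
  exact: consistent_arrowsS (subsetT _) hcons.
rewrite /Rseq (foldl_revise_Uvec consistent_blocks) seq_cons_level_sets; last exact: code_lt.
rewrite lex_cons_maximal_worlds.
split=> H w sw min_w; apply: H => // u su.
  by rewrite -code_arrows_ltE; apply/negP; rewrite -leqNgt; apply: min_w.
by rewrite leqNgt; apply/negP => /code_arrows_ltE; apply: min_w.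
Qed.
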